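(* Assume $\mathcal R_0>1$, let $k$ satisfy $$\frac{\beta_E\nu\nu_E-(\nu_E+\delta_E)\delta_F}{\beta_E\nu\nu_E-(1-\gamma_s)(\nu_E+\delta_E)\delta_F}\,\delta_s<k<\delta_s,$$ and let $\kappa>0$ satisfy $$\frac{\delta_s-k}{k}\le\kappa\le\frac{\gamma_s\delta_F(\nu_E+\delta_E)}{\beta_E\nu\nu_E-\delta_F(\nu_E+\delta_E)}.$$ Then $\mathcal M(\kappa):=\mathcal T_1\cap\mathcal T_2(\kappa)\cap\mathcal T_3$ is positively invariant (for all Filippov solutions) for the closed-loop system $$\dot E=\beta_E F\Big(1-\frac EK\Big)-(\nu_E+\delta_E)E,\quad \dot M=(1-\nu)\nu_E E-\delta_M M,\quad \dot F=\nu\nu_E E\frac{M}{M+\gamma_sM_s}-\delta_F F,\quad \dot M_s=k(M+M_s)-\delta_sM_s.$$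
   Context: Parameters: $\beta_E,\nu_E,\delta_E,\delta_M,\delta_F,\delta_s,K>0$, $\nu\in(0,1)$, $\gamma_s\in(0,1]$, $\delta_s\ge\delta_M$. $\mathcal R_0:=\dfrac{\beta_E\nu\nu_E}{\delta_F(\nu_E+\delta_E)}$. $\mathcal D'=[0,+\infty)^4$ with points $z=(E,M,F,M_s)^T$. Sets: $\mathcal T_1=\{z\in\mathcal D':\beta_EF(1-E/K)\le(\nu_E+\delta_E)E\}$, $\mathcal T_2(\kappa)=\{z\in\mathcal D':M\le\kappa M_s\}$, $\mathcal T_3=\{z\in\mathcal D':(1-\nu)\nu_EE\le\delta_MM\}$. Solutions are Filippov solutions: locally Lipschitz $z:I\to\mathcal D'$ with $\dot z(t)\in\bigcap_{\varepsilon>0}\bigcap_{N}\overline{\mathrm{conv}}\,X\big(((z(t)+\varepsilon B)\cap\mathcal D')\setminus N\big)$ for a.e. $t$, where $X$ is the closed-loop right-hand side, $B$ the unit ball of $\mathbb R^4$, $N$ ranging over Lebesgue-null sets. Positive invariance: every Filippov solution with $z(0)\in\mathcal M(\kappa)$ stays in $\mathcal M(\kappa)$ for all $t\ge0$. *)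

From Stdlib Require Import Reals.
Open Scope R_scope.

Record pt : Type := mkpt { pE : R; pM : R; pF : R; pMs : R }.

Definition padd (x y : pt) : pt :=
  mkpt (pE x + pE y) (pM x + pM y) (pF x + pF y) (pMs x + pMs y).
Definition pscale (a : R) (x : pt) : pt :=
  mkpt (a * pE x) (a * pM x) (a * pF x) (a * pMs x).
Definition pzero : pt := mkpt 0 0 0 0.
Definition pdist (x y : pt) : R :=
  sqrt ((pE x - pE y)^2 + (pM x - pM y)^2 + (pF x - pF y)^2 + (pMs x - pMs y)^2).

Fixpoint rsum (n : nat) (f : nat -> R) : R :=
  match n with O => 0 | S m => rsum m f + f m end.
Fixpoint psum (n : nat) (f : nat -> pt) : pt :=
  match n with O => pzero | S m => padd (psum m f) (f m) end.

(* Lebesgue-null subsets of R and of R^4: coverable by countably many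
   boxes of arbitrarily small total volume. *)
Definition null1 (N : R -> Prop) : Prop :=
  forall eps, 0 < eps ->
  exists a b : nat -> R,
    (forall n, a n <= b n) /\
    (forall t, N t -> exists n, a n <= t <= b n) /\
    (forall m, rsum m (fun n => b n - a n) <= eps).

Definition in_box (a b x : pt) : Prop :=
  pE a <= pE x <= pE b /\ pM a <= pM x <= pM b /\
  pF a <= pF x <= pF b /\ pMs a <= pMs x <= pMs b.
Definition box_vol (a b : pt) : R :=
  (pE b - pE a) * (pM b - pM a) * (pF b - pF a) * (pMs b - pMs a).

Definition null4 (N : pt -> Prop) : Prop :=
  forall eps, 0 < eps ->
  exists a b : nat -> pt,
    (forall n, pE (a n) <= pE (b n) /\ pM (a n) <= pM (b n) /\
               pF (a n) <= pF (b n) /\ pMs (a n) <= pMs (b n)) /\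
    (forall x, N x -> exists n, in_box (a n) (b n) x) /\
    (forall m, rsum m (fun n => box_vol (a n) (b n)) <= eps).

Definition in_closed_conv (A : pt -> Prop) (v : pt) : Prop :=
  forall delta, 0 < delta ->
  exists (n : nat) (w : nat -> R) (p : nat -> pt),
    (forall i, (i < n)%nat -> 0 <= w i /\ A (p i)) /\
    rsum n w = 1 /\
    pdist v (psum n (fun i => pscale (w i) (p i))) < delta.

Definition Dp (z : pt) : Prop :=
  0 <= pE z /\ 0 <= pM z /\ 0 <= pF z /\ 0 <= pMs z.

Definition repro_number (betaE nu nuE deltaE deltaF : R) : R :=
  betaE * nu * nuE / (deltaF * (nuE + deltaE)).

(* At M + gamma_s M_s = 0 the fraction is
   undefined; Stdlib's division gives / 0 = 0 there, which is irrelevant for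
   Filippov solutions since that set is Lebesgue-null in R^4. *)
Definition X (betaE nuE deltaE deltaM deltaF deltas K nu gammas k : R)
    (z : pt) : pt :=
  let E := pE z in let M := pM z in let F := pF z in let Ms := pMs z in
  mkpt (betaE * F * (1 - E / K) - (nuE + deltaE) * E)
       ((1 - nu) * nuE * E - deltaM * M)
       (nu * nuE * E * (M / (M + gammas * Ms)) - deltaF * F)
       (k * (M + Ms) - deltas * Ms).

Definition filippov_set (Xf : pt -> pt) (z : pt) (v : pt) : Prop :=
  forall eps, 0 < eps -> forall N : pt -> Prop, null4 N ->
  in_closed_conv
    (fun y => exists x, Dp x /\ pdist x z <= eps /\ ~ N x /\ y = Xf x) v.

Definition is_interval (I : R -> Prop) : Prop :=
  forall a b c, I a -> I c -> a <= b <= c -> I b.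

Definition loc_lipschitz_on (I : R -> Prop) (z : R -> pt) : Prop :=
  forall t, I t -> exists delta L, 0 < delta /\
    forall s u, I s -> I u -> Rabs (s - t) < delta -> Rabs (u - t) < delta ->
      pdist (z s) (z u) <= L * Rabs (s - u).

Definition filippov_solution (Xf : pt -> pt) (I : R -> Prop) (z : R -> pt)
    : Prop :=
  (forall t, I t -> Dp (z t)) /\
  loc_lipschitz_on I z /\
  exists N : R -> Prop, null1 N /\
    forall t, I t -> ~ N t ->
      exists v : pt,
        derivable_pt_lim (fun s => pE (z s)) t (pE v) /\
        derivable_pt_lim (fun s => pM (z s)) t (pM v) /\
        derivable_pt_lim (fun s => pF (z s)) t (pF v) /\
        derivable_pt_lim (fun s => pMs (z s)) t (pMs v) /\
        filippov_set Xf (z t) v.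

Definition positively_invariant (Xf : pt -> pt) (S : pt -> Prop) : Prop :=
  forall (I : R -> Prop) (z : R -> pt),
    is_interval I -> I 0 -> filippov_solution Xf I z -> S (z 0) ->
    forall t, I t -> 0 <= t -> S (z t).

Definition T1 (betaE nuE deltaE K : R) (z : pt) : Prop :=
  Dp z /\ betaE * pF z * (1 - pE z / K) <= (nuE + deltaE) * pE z.
Definition T2 (kappa : R) (z : pt) : Prop :=
  Dp z /\ pM z <= kappa * pMs z.
Definition T3 (nu nuE deltaM : R) (z : pt) : Prop :=
  Dp z /\ (1 - nu) * nuE * pE z <= deltaM * pM z.

Definition Mset (betaE nuE deltaE deltaM K nu kappa : R) (z : pt) : Prop :=
  T1 betaE nuE deltaE K z /\ T2 kappa z /\ T3 nu nuE deltaM z.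

From Stdlib Require Import Reals Lra Lia Psatz FunctionalExtensionality Classical.
Open Scope R_scope.

(* Write T_i = D' /\ {g_i <= 0} and let V = g1^+ + g2^+ + g3^+ be the total
   violation of the three constraints, so that M(kappa) = D' /\ {V <= 0}.
   Along a Filippov solution z, t |-> V (z t) is locally Lipschitz, and at every
   time outside a null set where z has a Filippov velocity v, each g_i^+ has
   upper right Dini derivative bounded by a multiple of the other violations
   (the velocity bounds below: the key one is that the recruitment term of the
   F-equation is dominated, which is where the hypotheses on R0 and kappa enter;
   the one for T2 uses (deltas - k) / k <= kappa).  Hence D^+ V <= C V almost
   everywhere, and a Gronwall argument shows V stays 0. *)

Lemma Rabs_le_inv (a b : R) : Rabs a <= b -> - b <= a <= b.
Proof. unfold Rabs; destruct Rcase_abs; intros; lra. Qed.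

Lemma rsum_le (n : nat) (f g : nat -> R) :
  (forall i, (i < n)%nat -> f i <= g i) -> rsum n f <= rsum n g.
Proof.
  induction n as [|n IH]; simpl; intros H; [lra|].
  assert (f n <= g n) by (apply H; lia).
  assert (rsum n f <= rsum n g) by (apply IH; intros; apply H; lia).
  lra.
Qed.

Lemma rsum_ge0 (n : nat) (f : nat -> R) :
  (forall i, (i < n)%nat -> 0 <= f i) -> 0 <= rsum n f.
Proof.
  intros H. apply (rsum_le n (fun _ => 0)) in H.
  assert (Hzero : forall m, rsum m (fun _ => 0) = 0) by (induction m; simpl; lra).
  rewrite Hzero in H. exact H.
Qed.

Lemma rsum_plus (n : nat) (f g : nat -> R) :
  rsum n (fun i => f i + g i) = rsum n f + rsum n g.
Proof. induction n; simpl; [lra|]. rewrite IHn. lra. Qed.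

Lemma rsum_minus (n : nat) (f g : nat -> R) :
  rsum n (fun i => f i - g i) = rsum n f - rsum n g.
Proof. induction n; simpl; [lra|]. rewrite IHn. lra. Qed.

Lemma rsum_scal (n : nat) (c : R) (f : nat -> R) :
  rsum n (fun i => c * f i) = c * rsum n f.
Proof. induction n; simpl; [lra|]. rewrite IHn. lra. Qed.

Lemma rsum_half_powers (n : nat) : rsum n (fun i => (/2) ^ (S i)) = 1 - (/2) ^ n.
Proof. induction n; cbn [rsum]; [simpl; lra|]. rewrite IHn. simpl. lra. Qed.

Lemma rsum_le_length (n m : nat) (f : nat -> R) :
  (forall i, 0 <= f i) -> (n <= m)%nat -> rsum n f <= rsum m f.
Proof. intros H Hnm. induction Hnm; simpl; [lra|]. specialize (H m). lra. Qed.

Lemma rsum_term_le (m n : nat) (f : nat -> R) :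
  (forall i, 0 <= f i) -> (n < m)%nat -> f n <= rsum m f.
Proof.
  intros H Hnm. eapply Rle_trans; [|apply (rsum_le_length (S n)); auto].
  simpl. assert (0 <= rsum n f) by (apply rsum_ge0; auto). lra.
Qed.

Lemma real_ind (a b : R) (Q : R -> Prop) :
  a <= b -> Q a ->
  (forall s, a < s <= b -> (forall u, a <= u < s -> Q u) -> Q s) ->
  (forall s, a <= s < b -> (forall u, a <= u <= s -> Q u) ->
     exists h, 0 < h /\ forall u, s < u < s + h -> u <= b -> Q u) ->
  forall u, a <= u <= b -> Q u.
Proof.
  intros Hab Qa Hclosed Hstep.
  set (S := fun t => a <= t <= b /\ forall u, a <= u <= t -> Q u).
  assert (Sa : S a) by (split; [lra| intros u Hu; replace u with a by lra; exact Qa]).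
  destruct (completeness S) as [s [Hub Hlub]].
  { exists b. intros t [Ht _]. lra. }
  { exists a. exact Sa. }
  assert (Has : a <= s) by (apply Hub, Sa).
  assert (Hsb : s <= b) by (apply Hlub; intros t [Ht _]; lra).
  assert (Hbelow : forall u, a <= u < s -> Q u).
  { intros u Hu. destruct (classic (exists t, S t /\ u <= t)) as [[t [[_ Ht] Hut]]|Hno].
    - apply Ht. lra.
    - exfalso. assert (s <= u); [|lra]. apply Hlub. intros t St.
      apply Rnot_lt_le. intros Hut. apply Hno. exists t. split; [exact St|lra]. }
  assert (Hupto : forall u, a <= u <= s -> Q u).
  { intros u Hu. destruct (Req_dec u s) as [->|Hne]; [|apply Hbelow; lra].
    destruct (Req_dec s a) as [->|Hsa]; [exact Qa|]. apply Hclosed; [lra|exact Hbelow]. }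
  destruct (Rle_or_lt b s) as [Hbs|Hbs].
  - intros u Hu. apply Hupto. lra.
  - exfalso. destruct (Hstep s ltac:(lra) Hupto) as [h [Hh Hq]].
    set (t := Rmin (s + h/2) b).
    assert (s < t /\ t <= b /\ t <= s + h/2) as [Ht1 [Ht2 Ht3]]
      by (unfold t, Rmin; destruct Rle_dec; lra).
    assert (S t).
    { split; [lra|]. intros u Hu. destruct (Rle_or_lt u s); [apply Hupto|apply Hq]; lra. }
    assert (t <= s) by (apply Hub; assumption). lra.
Qed.

Definition right_dini_le (f : R -> R) (t c : R) : Prop :=
  forall eps, 0 < eps -> exists delta, 0 < delta /\
    forall h, 0 < h < delta -> f (t + h) - f t <= (c + eps) * h.

Lemma right_dini_le_weaken (f : R -> R) (t c c' : R) :
  c <= c' -> right_dini_le f t c -> right_dini_le f t c'.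
Proof.
  intros Hc Hf eps Heps. destruct (Hf eps Heps) as [d [Hd P]].
  exists d. split; [exact Hd|]. intros h Hh. specialize (P h Hh). nra.
Qed.

Lemma right_dini_le_plus (f g : R -> R) (t c d : R) :
  right_dini_le f t c -> right_dini_le g t d ->
  right_dini_le (fun s => f s + g s) t (c + d).
Proof.
  intros Hf Hg eps Heps.
  destruct (Hf (eps/2) ltac:(lra)) as [d1 [Hd1 P1]].
  destruct (Hg (eps/2) ltac:(lra)) as [d2 [Hd2 P2]].
  exists (Rmin d1 d2). split; [apply Rmin_glb_lt; lra|]. intros h Hh.
  assert (h < d1 /\ h < d2) as [H1 H2] by (unfold Rmin in Hh; destruct Rle_dec; lra).
  specialize (P1 h ltac:(lra)). specialize (P2 h ltac:(lra)). nra.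
Qed.

Lemma right_dini_le_sub_linear (f : R -> R) (t c a s0 : R) :
  right_dini_le f t c -> right_dini_le (fun w => f w - a * (w - s0)) t (c - a).
Proof.
  intros Hf eps Heps. destruct (Hf eps Heps) as [d [Hd P]].
  exists d. split; [exact Hd|]. intros h Hh. specialize (P h Hh). nra.
Qed.

Definition lipschitz_on (P : R -> Prop) (f : R -> R) (L : R) : Prop :=
  forall x y, P x -> P y -> Rabs (f x - f y) <= L * Rabs (x - y).

Lemma lipschitz_on_sub_linear (P : R -> Prop) (f : R -> R) (L a s0 : R) :
  0 <= a -> lipschitz_on P f L -> lipschitz_on P (fun w => f w - a * (w - s0)) (L + a).
Proof.
  intros Ha Hf x y Hx Hy. specialize (Hf x y Hx Hy).
  replace (f x - a * (x - s0) - (f y - a * (y - s0))) with ((f x - f y) + - a * (x - y)) by ring.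
  eapply Rle_trans; [apply Rabs_triang|].
  rewrite Rabs_mult, Rabs_Ropp, (Rabs_right a) by lra. lra.
Qed.

Definition cover_len (c e t : R) : R := Rmax 0 (Rmin t e - c).

Lemma cover_len_ge0 (c e t : R) : 0 <= cover_len c e t.
Proof. apply Rmax_l. Qed.

Lemma cover_len_mono (c e t t' : R) : t <= t' -> cover_len c e t <= cover_len c e t'.
Proof. unfold cover_len, Rmax, Rmin. intros. repeat destruct Rle_dec; lra. Qed.

Lemma cover_len_le (c e t : R) : c <= e -> cover_len c e t <= e - c.
Proof. unfold cover_len, Rmax, Rmin. intros. repeat destruct Rle_dec; lra. Qed.

Lemma cover_len_gain (c e t t' : R) :
  c <= t -> t <= t' <= e -> cover_len c e t' - cover_len c e t = t' - t.
Proof. unfold cover_len, Rmax, Rmin. intros. repeat destruct Rle_dec; lra. Qed.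

Lemma null_absorber (N : R -> Prop) (eps : R) :
  null1 N -> 0 < eps ->
  exists G : nat -> R -> R,
    (forall m t t', t <= t' -> G m t <= G m t') /\
    (forall m m' t, (m <= m')%nat -> G m t <= G m' t) /\
    (forall m t, 0 <= G m t <= 2 * eps) /\
    (forall s, N s -> exists h n, 0 < h /\
       forall m u, (n <= m)%nat -> s <= u < s + h -> u - s <= G m u - G m s).
Proof.
  intros HN Heps. destruct (HN eps Heps) as [c [d [Hcd [Hcov Hsum]]]].
  set (e := fun n => d n + eps * (/2) ^ (S n)).
  assert (Hde : forall n, d n < e n).
  { intros n. unfold e. assert (0 < (/2) ^ (S n)) by (apply pow_lt; lra). nra. }
  exists (fun m t => rsum m (fun n => cover_len (c n) (e n) t)).
  split; [|split; [|split]].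
  - intros m t t' Ht. apply rsum_le. intros. apply cover_len_mono, Ht.
  - intros m m' t Hm. apply rsum_le_length; [intros; apply cover_len_ge0|exact Hm].
  - intros m t. split; [apply rsum_ge0; intros; apply cover_len_ge0|].
    eapply Rle_trans.
    { apply (rsum_le m _ (fun n => (d n - c n) + eps * (/2) ^ (S n))). intros n _.
      eapply Rle_trans; [apply cover_len_le|]; specialize (Hcd n); specialize (Hde n);
        unfold e in *; lra. }
    rewrite rsum_plus, rsum_scal, rsum_half_powers. specialize (Hsum m).
    assert (0 < (/2) ^ m) by (apply pow_lt; lra). nra.
  - intros s Hs. destruct (Hcov s Hs) as [n Hn]. specialize (Hde n).
    exists (e n - s), (S n). split; [lra|]. intros m u Hm Hu.
    rewrite <- rsum_minus.
    rewrite <- (cover_len_gain (c n) (e n) s u) by lra.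
    apply (rsum_term_le m n (fun i => cover_len (c i) (e i) u - cover_len (c i) (e i) s)); [|lia].
    intros i. pose proof (cover_len_mono (c i) (e i) s u ltac:(lra)). lra.
Qed.

Section DiniMonotonicity.
(* A Lipschitz function on [[a, b]] whose upper right Dini derivative is
   nonpositive outside a null set [N] is nonincreasing: on [N] the possible
   increase is paid for by the absorbing functions [G] of [null_absorber]. *)
Variables (f : R -> R) (a b L : R) (N : R -> Prop).
Hypothesis HL : 0 <= L.
Hypothesis Hlip : lipschitz_on (fun x => a <= x <= b) f L.
Hypothesis Hdini : forall t, a <= t < b -> ~ N t -> right_dini_le f t 0.

Section Approximation.
Variables (eps : R) (G : nat -> R -> R).
Hypothesis Heps : 0 < eps.
Hypothesis HG_mono : forall m t t', t <= t' -> G m t <= G m t'.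
Hypothesis HG_mono_m : forall m m' t, (m <= m')%nat -> G m t <= G m' t.
Hypothesis HG_bound : forall m t, 0 <= G m t <= 2 * eps.
Hypothesis HG_absorb : forall s, N s -> exists h n, 0 < h /\
  forall m u, (n <= m)%nat -> s <= u < s + h -> u - s <= G m u - G m s.

(* Invariant of the real induction: [f t] exceeds [f a] by at most
   [eps (t - a)] plus an absorbed amount [L G m t]. *)
Definition increment_bounded (t : R) : Prop :=
  forall eta, 0 < eta -> exists m, f t <= f a + eps * (t - a) + L * G m t + eta.

(* The invariant passes to left limits since [f] is Lipschitz. *)
Lemma increment_bounded_left_limit (s : R) : a < s <= b ->
  (forall u, a <= u < s -> increment_bounded u) -> increment_bounded s.
Proof.
  intros Hs Hbelow eta Heta.
  set (r := eta / (2 * (L + 1))).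
  assert (Hr : 0 < r) by (unfold r; apply Rdiv_lt_0_compat; lra).
  assert (HLr : L * r <= eta / 2) by (unfold r; apply Rmult_le_reg_r with (2 * (L + 1)); [lra|];
    field_simplify; [nra|lra]).
  set (w := Rmax a (s - r)).
  assert (a <= w < s /\ s - w <= r) as [Hw1 Hw2] by (unfold w, Rmax; destruct Rle_dec; lra).
  destruct (Hbelow w Hw1 (eta/2) ltac:(lra)) as [m Hm]. exists m.
  pose proof (Rabs_le_inv _ _ (Hlip s w ltac:(lra) ltac:(lra))) as Hfw.
  rewrite (Rabs_right (s - w)) in Hfw by lra.
  pose proof (HG_mono m w s ltac:(lra)).
  assert (L * G m w <= L * G m s) by (apply Rmult_le_compat_l; lra).
  assert (L * (s - w) <= L * r) by (apply Rmult_le_compat_l; lra).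
  nra.
Qed.

(* The invariant propagates a little to the right of every point of [[a, b)]:
   on [N] the growth of [f] is absorbed by [G], elsewhere it is at rate [eps]. *)
Lemma increment_bounded_step (s : R) : a <= s < b -> increment_bounded s ->
  exists h, 0 < h /\ forall u, s < u < s + h -> u <= b -> increment_bounded u.
Proof.
  intros Hs Ps. destruct (classic (N s)) as [HNs|HNs].
  - destruct (HG_absorb s HNs) as [h [n [Hh Hgain]]].
    exists h. split; [exact Hh|]. intros u Hu Hub eta Heta.
    destruct (Ps eta Heta) as [m Hm]. exists (Nat.max m n).
    pose proof (Hgain (Nat.max m n) u ltac:(lia) ltac:(lra)) as Hg.
    pose proof (HG_mono_m m (Nat.max m n) s ltac:(lia)).
    pose proof (Rabs_le_inv _ _ (Hlip u s ltac:(lra) ltac:(lra))) as Hfu.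
    rewrite (Rabs_right (u - s)) in Hfu by lra.
    assert (L * G m s <= L * G (Nat.max m n) s) by (apply Rmult_le_compat_l; lra).
    assert (L * (u - s) <= L * (G (Nat.max m n) u - G (Nat.max m n) s))
      by (apply Rmult_le_compat_l; lra).
    nra.
  - destruct (Hdini s ltac:(lra) HNs eps Heps) as [d [Hd Hf]].
    exists d. split; [exact Hd|]. intros u Hu Hub eta Heta.
    destruct (Ps eta Heta) as [m Hm]. exists m.
    pose proof (Hf (u - s) ltac:(lra)) as Hfu. replace (s + (u - s)) with u in Hfu by ring.
    pose proof (HG_mono m s u ltac:(lra)).
    assert (L * G m s <= L * G m u) by (apply Rmult_le_compat_l; lra).
    nra.
Qed.

Lemma increment_bounded_everywhere : a <= b -> increment_bounded b.
Proof.
  intros Hab. apply (real_ind a b increment_bounded Hab); [| | |lra].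
  - intros eta Heta. exists 0%nat. assert (0 <= L * G 0%nat a); [|lra].
    apply Rmult_le_pos; [lra|apply HG_bound].
  - exact increment_bounded_left_limit.
  - intros s Hs Hupto. apply increment_bounded_step; [exact Hs|apply Hupto; lra].
Qed.

End Approximation.

Lemma dini_nonpos_nonincreasing : a <= b -> null1 N -> f b <= f a.
Proof.
  intros Hab HN. apply Rle_plus_epsilon. intros eps Heps.
  set (eps' := eps / (b - a + 2 * L + 1)).
  assert (Heps' : 0 < eps') by (unfold eps'; apply Rdiv_lt_0_compat; lra).
  assert (Hscale : eps' * (b - a + 2 * L + 1) = eps) by (unfold eps'; field; lra).
  destruct (null_absorber N eps' HN Heps') as [G [HGt [HGm [HGb HGa]]]].
  destruct (increment_bounded_everywhere eps' G Heps' HGt HGm HGb HGa Hab eps' Heps')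
    as [m Hm].
  assert (L * G m b <= L * (2 * eps')) by (apply Rmult_le_compat_l; [lra|apply HGb]).
  nra.
Qed.
End DiniMonotonicity.

Lemma le_half_powers (x c : R) : (forall n, x <= (/2) ^ n * c) -> x <= 0.
Proof.
  intros H. apply Rnot_lt_le. intros Hx.
  assert (Hc : 0 < c) by (specialize (H 0%nat); simpl in H; lra).
  destruct (pow_lt_1_zero (/2) ltac:(rewrite Rabs_right; lra) (x / c)) as [n Hn].
  { apply Rdiv_lt_0_compat; lra. }
  specialize (Hn n (le_n n)). rewrite Rabs_right in Hn by (apply Rle_ge, pow_le; lra).
  specialize (H n). apply (Rmult_lt_compat_r c) in Hn; [|exact Hc].
  replace (x / c * c) with x in Hn by (field; lra). lra.
Qed.

(* By induction, [W <= LW h / 2^n]: if [W <= m] on the interval,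
   [W - C m (. - s)] is nonincreasing, so [W <= C m h <= m / 2]. *)
Lemma short_interval_vanishing (W : R -> R) (N : R -> Prop) (C LW s h : R) :
  0 <= C -> 0 <= LW -> 0 < h -> C * h <= /2 -> W s <= 0 ->
  lipschitz_on (fun u => s <= u <= s + h) W LW -> null1 N ->
  (forall t, s <= t < s + h -> ~ N t -> right_dini_le W t (C * W t)) ->
  forall u, s <= u <= s + h -> W u <= 0.
Proof.
  intros HC HLW Hh HCh Hs Hlip HN Hdini u Hu.
  apply (le_half_powers (W u) (LW * h)). intros n. revert u Hu.
  induction n as [|n IH]; intros u Hu.
  - pose proof (Rabs_le_inv _ _ (Hlip u s ltac:(lra) ltac:(lra))) as Hus.
    rewrite (Rabs_right (u - s)) in Hus by lra.
    assert (LW * (u - s) <= LW * h) by (apply Rmult_le_compat_l; lra).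
    simpl. lra.
  - set (m := (/2) ^ n * (LW * h)) in *.
    assert (Hm : 0 <= m) by (unfold m; apply Rmult_le_pos; [apply pow_le|apply Rmult_le_pos]; lra).
    assert (Hdecr : W u - C * m * (u - s) <= W s - C * m * (s - s)).
    { apply (dini_nonpos_nonincreasing (fun w => W w - C * m * (w - s)) s u (LW + C * m) N);
        [nra| | |lra|exact HN].
      - intros x y Hx Hy.
        apply (lipschitz_on_sub_linear (fun x => s <= x <= s + h) W LW (C * m) s);
          [nra|exact Hlip|lra|lra].
      - intros t Ht HNt. replace 0 with (C * m - C * m) by ring.
        apply right_dini_le_sub_linear.
        apply (right_dini_le_weaken W t (C * W t)); [|apply Hdini; [lra|exact HNt]].
        apply Rmult_le_compat_l; [lra|apply IH; lra]. }
    assert (C * m * (u - s) <= m * (C * h)) by (rewrite (Rmult_comm C m), Rmult_assoc;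
      apply Rmult_le_compat_l; [lra|apply Rmult_le_compat_l; lra]).
    assert (m * (C * h) <= m / 2) by (apply Rmult_le_compat_l with (r := m) in HCh; lra).
    replace ((/2) ^ S n * (LW * h)) with (m / 2) by (unfold m; simpl; field).
    lra.
Qed.

Definition loc_lipschitz_fun (I : R -> Prop) (f : R -> R) : Prop :=
  forall s, I s -> exists delta L, 0 < delta /\ 0 <= L /\
    lipschitz_on (fun u => I u /\ Rabs (u - s) < delta) f L.

(* Real induction on [[0, T]] with [short_interval_vanishing]. *)
Lemma dini_gronwall_vanishing (I : R -> Prop) (W : R -> R) (N : R -> Prop) (C : R) :
  is_interval I -> I 0 -> 0 <= C -> W 0 <= 0 -> loc_lipschitz_fun I W -> null1 N ->
  (forall t, I t -> ~ N t -> right_dini_le W t (C * W t)) ->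
  forall T, I T -> 0 <= T -> W T <= 0.
Proof.
  intros HI HI0 HC HW0 Hlip HN Hdini T HIT HT.
  assert (HIT' : forall u, 0 <= u <= T -> I u) by (intros u Hu; apply (HI 0 u T); auto).
  apply (real_ind 0 T (fun u => W u <= 0) HT HW0); [| |lra].
  - (* closedness: [W] is continuous from the left *)
    intros s Hs Hbelow. destruct (Hlip s (HIT' s ltac:(lra))) as [del [LW [Hdel [HLW Hl]]]].
    apply Rle_plus_epsilon. intros eps Heps.
    set (r := Rmin (Rmin (del / 2) (s / 2)) (eps / (LW + 1))).
    assert (0 < r /\ r <= del / 2 /\ r <= s / 2 /\ r <= eps / (LW + 1)) as [Hr [Hr1 [Hr2 Hr3]]]
      by (unfold r, Rmin; repeat destruct Rle_dec; split; try apply Rdiv_lt_0_compat; lra).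
    assert (HLWr : LW * r <= eps).
    { apply Rle_trans with ((LW + 1) * (eps / (LW + 1))); [nra|right; field; lra]. }
    assert (Hs_near : I s /\ Rabs (s - s) < del)
      by (split; [apply HIT'; lra|rewrite Rminus_diag, Rabs_R0; lra]).
    assert (Hsr_near : I (s - r) /\ Rabs (s - r - s) < del)
      by (split; [apply HIT'; lra|rewrite Rabs_left; lra]).
    pose proof (Rabs_le_inv _ _ (Hl s (s - r) Hs_near Hsr_near)) as Hsr.
    replace (s - (s - r)) with r in Hsr by ring. rewrite Rabs_right in Hsr by lra.
    pose proof (Hbelow (s - r) ltac:(lra)). lra.
  -
    intros s Hs Hupto. destruct (Hlip s (HIT' s ltac:(lra))) as [del [LW [Hdel [HLW Hl]]]].
    set (h := Rmin (Rmin (del / 2) (T - s)) (/ (2 * C + 2))).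
    assert (0 < h /\ h <= del / 2 /\ h <= T - s /\ h <= / (2 * C + 2)) as [Hh [Hh1 [Hh2 Hh3]]]
      by (unfold h, Rmin; repeat destruct Rle_dec;
          split; try apply Rinv_0_lt_compat; lra).
    assert (HCh : C * h <= / 2).
    { apply Rle_trans with ((C + 1) * / (2 * C + 2)).
      - assert (0 < / (2 * C + 2)) by (apply Rinv_0_lt_compat; lra). nra.
      - right. field. lra. }
    exists h. split; [exact Hh|]. intros u Hu HuT.
    apply (short_interval_vanishing W N C LW s h HC HLW Hh HCh (Hupto s ltac:(lra)));
      [| exact HN | intros t Ht; apply Hdini, HIT'; lra | lra].
    intros x y Hx Hy. apply Hl; split; try apply HIT'; try rewrite Rabs_right; lra.
Qed.

Lemma coord_le_pdist (x y : pt) :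
  Rabs (pE x - pE y) <= pdist x y /\ Rabs (pM x - pM y) <= pdist x y /\
  Rabs (pF x - pF y) <= pdist x y /\ Rabs (pMs x - pMs y) <= pdist x y.
Proof.
  assert (Hcoord : forall u s, 0 <= s -> u ^ 2 <= s -> Rabs u <= sqrt s).
  { intros u s Hs Hu. rewrite <- sqrt_Rsqr_abs. apply sqrt_le_1_alt. unfold Rsqr. simpl in Hu. lra. }
  pose proof (pow2_ge_0 (pE x - pE y)). pose proof (pow2_ge_0 (pM x - pM y)).
  pose proof (pow2_ge_0 (pF x - pF y)). pose proof (pow2_ge_0 (pMs x - pMs y)).
  unfold pdist. repeat split; apply Hcoord; lra.
Qed.

Definition pcont (g : pt -> R) (z : pt) : Prop :=
  forall eta, 0 < eta -> exists e, 0 < e /\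
    forall x, pdist x z <= e -> Rabs (g x - g z) <= eta.

Lemma pcont_lipschitz (g : pt -> R) (L : R) (z : pt) :
  0 <= L -> (forall x, Rabs (g x - g z) <= L * pdist x z) -> pcont g z.
Proof.
  intros HL Hg eta Heta. exists (eta / (L + 1)). split; [apply Rdiv_lt_0_compat; lra|].
  intros x Hx. eapply Rle_trans; [apply Hg|].
  apply Rle_trans with ((L + 1) * (eta / (L + 1))); [|right; field; lra].
  assert (0 <= pdist x z) by apply sqrt_pos. nra.
Qed.

Lemma pcont_const (c : R) (z : pt) : pcont (fun _ => c) z.
Proof. apply (pcont_lipschitz _ 0); [lra|]. intros x. rewrite Rminus_diag, Rabs_R0. lra. Qed.

Lemma pcont_E (z : pt) : pcont pE z.
Proof. apply (pcont_lipschitz _ 1); [lra|]. intros x. rewrite Rmult_1_l. apply coord_le_pdist. Qed.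
Lemma pcont_M (z : pt) : pcont pM z.
Proof. apply (pcont_lipschitz _ 1); [lra|]. intros x. rewrite Rmult_1_l. apply coord_le_pdist. Qed.
Lemma pcont_F (z : pt) : pcont pF z.
Proof. apply (pcont_lipschitz _ 1); [lra|]. intros x. rewrite Rmult_1_l. apply coord_le_pdist. Qed.
Lemma pcont_Ms (z : pt) : pcont pMs z.
Proof. apply (pcont_lipschitz _ 1); [lra|]. intros x. rewrite Rmult_1_l. apply coord_le_pdist. Qed.

Lemma pcont_plus (f g : pt -> R) (z : pt) :
  pcont f z -> pcont g z -> pcont (fun x => f x + g x) z.
Proof.
  intros Hf Hg eta Heta.
  destruct (Hf (eta/2) ltac:(lra)) as [e1 [He1 H1]].
  destruct (Hg (eta/2) ltac:(lra)) as [e2 [He2 H2]].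
  exists (Rmin e1 e2). split; [apply Rmin_glb_lt; lra|]. intros x Hx.
  specialize (H1 x (Rle_trans _ _ _ Hx (Rmin_l _ _))).
  specialize (H2 x (Rle_trans _ _ _ Hx (Rmin_r _ _))).
  replace (f x + g x - (f z + g z)) with ((f x - f z) + (g x - g z)) by ring.
  eapply Rle_trans; [apply Rabs_triang|lra].
Qed.

Lemma pcont_opp (f : pt -> R) (z : pt) : pcont f z -> pcont (fun x => - f x) z.
Proof.
  intros Hf eta Heta. destruct (Hf eta Heta) as [e [He H]]. exists e. split; [exact He|].
  intros x Hx. replace (- f x - - f z) with (- (f x - f z)) by ring.
  rewrite Rabs_Ropp. apply H, Hx.
Qed.

Lemma pcont_mult (f g : pt -> R) (z : pt) :
  pcont f z -> pcont g z -> pcont (fun x => f x * g x) z.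
Proof.
  intros Hf Hg eta Heta.
  set (B := Rabs (f z) + Rabs (g z) + 1).
  assert (HB : 1 <= B) by (unfold B; pose proof (Rabs_pos (f z)); pose proof (Rabs_pos (g z)); lra).
  set (r := Rmin 1 (eta / B)).
  assert (0 < r /\ r <= 1 /\ r <= eta / B) as [Hr [Hr1 Hr2]]
    by (unfold r, Rmin; destruct Rle_dec; split; try apply Rdiv_lt_0_compat; lra).
  assert (HrB : r * B <= eta) by (apply Rmult_le_compat_r with (r := B) in Hr2;
    [replace (eta / B * B) with eta in Hr2 by (field; lra); exact Hr2|lra]).
  destruct (Hf r Hr) as [e1 [He1 H1]]. destruct (Hg r Hr) as [e2 [He2 H2]].
  exists (Rmin e1 e2). split; [apply Rmin_glb_lt; lra|]. intros x Hx.
  specialize (H1 x (Rle_trans _ _ _ Hx (Rmin_l _ _))).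
  specialize (H2 x (Rle_trans _ _ _ Hx (Rmin_r _ _))).
  replace (f x * g x - f z * g z)
    with ((f x - f z) * (g x - g z) + f z * (g x - g z) + g z * (f x - f z)) by ring.
  eapply Rle_trans; [apply Rabs_triang|].
  eapply Rle_trans; [apply Rplus_le_compat_r, Rabs_triang|].
  rewrite !Rabs_mult.
  pose proof (Rabs_pos (f x - f z)). pose proof (Rabs_pos (g x - g z)).
  pose proof (Rabs_pos (f z)). pose proof (Rabs_pos (g z)).
  unfold B in *. nra.
Qed.

Lemma pcont_max0 (f : pt -> R) (z : pt) : pcont f z -> pcont (fun x => Rmax 0 (f x)) z.
Proof.
  intros Hf eta Heta. destruct (Hf eta Heta) as [e [He H]]. exists e. split; [exact He|].
  intros x Hx. specialize (H x Hx). revert H. unfold Rmax.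
  repeat destruct Rle_dec; unfold Rabs; repeat destruct Rcase_abs; lra.
Qed.

Ltac prove_pcont :=
  unfold Rminus, Rdiv;
  repeat first [ apply pcont_const | apply pcont_E | apply pcont_M | apply pcont_F
               | apply pcont_Ms | apply pcont_max0 | apply pcont_plus | apply pcont_mult
               | apply pcont_opp ].

Definition lin (c1 c2 c3 c4 : R) (p : pt) : R :=
  c1 * pE p + c2 * pM p + c3 * pF p + c4 * pMs p.

Lemma lin_psum (c1 c2 c3 c4 : R) (n : nat) (f : nat -> pt) :
  lin c1 c2 c3 c4 (psum n f) = rsum n (fun i => lin c1 c2 c3 c4 (f i)).
Proof. induction n; simpl; unfold lin in *; simpl in *; [ring|]. rewrite <- IHn. ring. Qed.

Lemma lin_lipschitz (c1 c2 c3 c4 : R) (p q : pt) :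
  Rabs (lin c1 c2 c3 c4 p - lin c1 c2 c3 c4 q) <=
  (Rabs c1 + Rabs c2 + Rabs c3 + Rabs c4) * pdist p q.
Proof.
  destruct (coord_le_pdist p q) as [H1 [H2 [H3 H4]]]. unfold lin.
  replace (c1 * pE p + c2 * pM p + c3 * pF p + c4 * pMs p -
           (c1 * pE q + c2 * pM q + c3 * pF q + c4 * pMs q)) with
    (c1 * (pE p - pE q) + c2 * (pM p - pM q) + c3 * (pF p - pF q) + c4 * (pMs p - pMs q))
    by ring.
  eapply Rle_trans; [apply Rabs_triang|].
  eapply Rle_trans; [apply Rplus_le_compat_r, Rabs_triang|].
  eapply Rle_trans; [apply Rplus_le_compat_r, Rplus_le_compat_r, Rabs_triang|].
  rewrite !Rabs_mult.
  pose proof (Rabs_pos c1). pose proof (Rabs_pos c2).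
  pose proof (Rabs_pos c3). pose proof (Rabs_pos c4).
  nra.
Qed.

Lemma null4_empty : null4 (fun _ => False).
Proof.
  intros eps Heps. exists (fun _ => pzero), (fun _ => pzero). split; [|split].
  - intros; simpl; lra.
  - intros x [].
  - intros m. assert (Hvol : box_vol pzero pzero = 0) by (unfold box_vol; simpl; ring).
    rewrite Hvol. induction m; cbn [rsum]; lra.
Qed.

Lemma filippov_lin_bound (Xf : pt -> pt) (z v : pt) (c1 c2 c3 c4 : R) (B : pt -> R) :
  filippov_set Xf z v -> pcont B z ->
  (forall x, Dp x -> lin c1 c2 c3 c4 (Xf x) <= B x) ->
  lin c1 c2 c3 c4 v <= B z.
Proof.
  intros Hv HB HX.
  set (S := Rabs c1 + Rabs c2 + Rabs c3 + Rabs c4).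
  assert (HS : 0 <= S) by (unfold S; pose proof (Rabs_pos c1); pose proof (Rabs_pos c2);
    pose proof (Rabs_pos c3); pose proof (Rabs_pos c4); lra).
  apply Rnot_lt_le. intros Hlt.
  set (eta := lin c1 c2 c3 c4 v - B z).
  destruct (HB (eta/2) ltac:(unfold eta; lra)) as [e [He HBe]].
  destruct (Hv e He _ null4_empty (eta / (4 * (S + 1)))) as [n [w [p [Hwp [Hw1 Hd]]]]].
  { apply Rdiv_lt_0_compat; unfold eta; lra. }
  set (q := psum n (fun i => pscale (w i) (p i))) in Hd.
  assert (Hq : lin c1 c2 c3 c4 q <= B z + eta / 2).
  { unfold q. rewrite lin_psum.
    apply Rle_trans with (rsum n (fun i => (B z + eta / 2) * w i));
      [|rewrite rsum_scal, Hw1; lra].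
    apply rsum_le. intros i Hi. destruct (Hwp i Hi) as [Hw0 [x [HDx [Hdx [_ ->]]]]].
    replace (lin c1 c2 c3 c4 (pscale (w i) (Xf x))) with (w i * lin c1 c2 c3 c4 (Xf x))
      by (unfold lin; simpl; ring).
    rewrite (Rmult_comm (B z + eta / 2)). apply Rmult_le_compat_l; [exact Hw0|].
    pose proof (HX x HDx). pose proof (Rabs_le_inv _ _ (HBe x Hdx)). lra. }
  pose proof (Rabs_le_inv _ _ (lin_lipschitz c1 c2 c3 c4 v q)) as Hvq. fold S in Hvq.
  assert (0 <= pdist v q) by apply sqrt_pos.
  assert (S * pdist v q <= eta / 4).
  { apply Rle_trans with ((S + 1) * (eta / (4 * (S + 1)))); [nra|].
    right. field. lra. }
  unfold eta in *. lra.
Qed.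

Lemma right_dini_le_pos_part (g : R -> R) (t d B : R) :
  derivable_pt_lim g t d -> (0 <= g t -> d <= B) -> 0 <= B ->
  right_dini_le (fun s => Rmax 0 (g s)) t B.
Proof.
  intros Hd Hb HB eps Heps.
  destruct (Hd eps Heps) as [[del Hdel] H1]. simpl in H1.
  assert (Hincr : forall h, 0 < h < del -> g (t + h) - g t <= (d + eps) * h).
  { intros h Hh. assert (A := H1 h ltac:(lra) ltac:(rewrite Rabs_right; lra)).
    apply Rabs_def2 in A. destruct A as [A _].
    assert (A' : (g (t + h) - g t) / h < d + eps) by lra.
    apply Rmult_lt_compat_r with (r := h) in A'; [|lra].
    replace ((g (t + h) - g t) / h * h) with (g (t + h) - g t) in A' by (field; lra). lra. }
  destruct (Rle_or_lt 0 (g t)) as [Hg|Hg].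
  - exists del. split; [exact Hdel|]. intros h Hh. specialize (Hincr h Hh).
    specialize (Hb Hg). unfold Rmax. repeat destruct Rle_dec; nra.
  - (* [g t < 0]: [g] stays negative for a while, so its positive part is flat *)
    set (r := - g t / (Rabs d + eps + 1)).
    pose proof (Rabs_pos d). pose proof (Rle_abs d).
    assert (Hr : 0 < r) by (unfold r; apply Rdiv_lt_0_compat; lra).
    assert (Hrr : (Rabs d + eps + 1) * r = - g t) by (unfold r; field; lra).
    exists (Rmin del r). split; [apply Rmin_glb_lt; lra|]. intros h Hh.
    assert (h < del /\ h < r) as [Hh1 Hh2] by (unfold Rmin in Hh; destruct Rle_dec; lra).
    specialize (Hincr h ltac:(lra)).
    assert (g (t + h) < 0) by nra.
    unfold Rmax. repeat destruct Rle_dec; nra.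
Qed.

(* The sets T1, T2, T3 are the parts of D' where [gT1], [gT2], [gT3] are nonpositive. *)
Definition gT1 (betaE nuE deltaE K : R) (x : pt) : R :=
  betaE * pF x * (1 - pE x / K) - (nuE + deltaE) * pE x.
Definition gT2 (kappa : R) : pt -> R := lin 0 1 0 (- kappa).
Definition gT3 (nu nuE deltaM : R) : pt -> R := lin ((1 - nu) * nuE) (- deltaM) 0 0.

Definition violation (betaE nuE deltaE deltaM K nu kappa : R) (x : pt) : R :=
  Rmax 0 (gT1 betaE nuE deltaE K x) + Rmax 0 (gT2 kappa x) + Rmax 0 (gT3 nu nuE deltaM x).

Lemma Mset_iff_violation (betaE nuE deltaE deltaM K nu kappa : R) (x : pt) :
  Mset betaE nuE deltaE deltaM K nu kappa x <->
  Dp x /\ violation betaE nuE deltaE deltaM K nu kappa x <= 0.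
Proof.
  unfold Mset, T1, T2, T3, violation, gT1, gT2, gT3, lin.
  pose proof (Rmax_l 0 (betaE * pF x * (1 - pE x / K) - (nuE + deltaE) * pE x)).
  pose proof (Rmax_l 0 (0 * pE x + 1 * pM x + 0 * pF x + - kappa * pMs x)).
  pose proof (Rmax_l 0 ((1 - nu) * nuE * pE x + - deltaM * pM x + 0 * pF x + 0 * pMs x)).
  unfold Rmax. repeat destruct Rle_dec; split; intuition lra.
Qed.

Lemma Rmax0_lipschitz (a b : R) : Rabs (Rmax 0 a - Rmax 0 b) <= Rabs (a - b).
Proof. unfold Rmax. repeat destruct Rle_dec; unfold Rabs; repeat destruct Rcase_abs; lra. Qed.

Lemma gT1_lipschitz (betaE nuE deltaE K Bd : R) (p q : pt) :
  0 < betaE -> 0 < K -> 0 <= nuE + deltaE -> Rabs (pE p) <= Bd -> Rabs (pF q) <= Bd ->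
  Rabs (gT1 betaE nuE deltaE K p - gT1 betaE nuE deltaE K q) <=
  (betaE * (1 + 2 * Bd / K) + (nuE + deltaE)) * pdist p q.
Proof.
  intros HbetaE HK Ha HEp HFq.
  destruct (coord_le_pdist p q) as [HE [_ [HF _]]].
  set (d := pdist p q) in *.
  pose proof (Rabs_le_inv _ _ HE). pose proof (Rabs_le_inv _ _ HF).
  pose proof (Rabs_le_inv _ _ HEp). pose proof (Rabs_le_inv _ _ HFq).
  set (iK := / K). assert (HiK : 0 < iK) by (apply Rinv_0_lt_compat; lra).
  unfold gT1, Rdiv. fold iK.
  replace (betaE * pF p * (1 - pE p * iK) - (nuE + deltaE) * pE p -
           (betaE * pF q * (1 - pE q * iK) - (nuE + deltaE) * pE q))
    with (betaE * ((pF p - pF q) * (1 - pE p * iK)) - betaE * iK * (pF q * (pE p - pE q))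
          - (nuE + deltaE) * (pE p - pE q)) by ring.
  assert (Hprod1 : Rabs ((pF p - pF q) * (1 - pE p * iK)) <= d * (1 + Bd * iK)).
  { rewrite Rabs_mult. apply Rmult_le_compat; try apply Rabs_pos; [exact HF|].
    apply Rabs_le. split; nra. }
  assert (Hprod2 : Rabs (pF q * (pE p - pE q)) <= Bd * d).
  { rewrite Rabs_mult. apply Rmult_le_compat; try apply Rabs_pos; assumption. }
  set (X1 := (pF p - pF q) * (1 - pE p * iK)) in *.
  set (X2 := pF q * (pE p - pE q)) in *.
  apply Rabs_le_inv in Hprod1, Hprod2.
  assert (0 < betaE * iK) by nra.
  assert (- (betaE * (d * (1 + Bd * iK))) <= betaE * X1 <= betaE * (d * (1 + Bd * iK)))
    by (split; nra).
  assert (- (betaE * iK * (Bd * d)) <= betaE * iK * X2 <= betaE * iK * (Bd * d))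
    by (split; nra).
  assert (- ((nuE + deltaE) * d) <= (nuE + deltaE) * (pE p - pE q) <= (nuE + deltaE) * d)
    by (split; nra).
  apply Rabs_le. split; nra.
Qed.

Definition path_derivative (z : R -> pt) (t : R) (v : pt) : Prop :=
  derivable_pt_lim (fun s => pE (z s)) t (pE v) /\
  derivable_pt_lim (fun s => pM (z s)) t (pM v) /\
  derivable_pt_lim (fun s => pF (z s)) t (pF v) /\
  derivable_pt_lim (fun s => pMs (z s)) t (pMs v).

Lemma lin_path_derivative (z : R -> pt) (t : R) (v : pt) (c1 c2 c3 c4 : R) :
  path_derivative z t v ->
  derivable_pt_lim (fun s => lin c1 c2 c3 c4 (z s)) t (lin c1 c2 c3 c4 v).
Proof.
  intros [H1 [H2 [H3 H4]]].
  apply derivable_pt_lim_plus; [apply derivable_pt_lim_plus; [apply derivable_pt_lim_plus|]|];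
    apply derivable_pt_lim_scal; assumption.
Qed.

Lemma gT1_path_derivative (z : R -> pt) (t : R) (v : pt) (betaE nuE deltaE K : R) :
  path_derivative z t v ->
  derivable_pt_lim (fun s => gT1 betaE nuE deltaE K (z s)) t
    (lin (- (betaE * pF (z t) / K + (nuE + deltaE))) 0 (betaE * (1 - pE (z t) / K)) 0 v).
Proof.
  intros [HE [_ [HF _]]].
  pose proof (derivable_pt_lim_minus _ _ _ _ _
    (derivable_pt_lim_mult _ _ _ _ _ (derivable_pt_lim_scal _ betaE _ _ HF)
       (derivable_pt_lim_minus _ _ _ _ _ (derivable_pt_lim_const 1 t)
          (derivable_pt_lim_scal _ (/ K) _ _ HE)))
    (derivable_pt_lim_scal _ (nuE + deltaE) _ _ HE)) as Hd.
  unfold mult_fct, minus_fct, mult_real_fct, fct_cte in Hd.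
  replace (fun s => gT1 betaE nuE deltaE K (z s)) with
    (fun s => betaE * pF (z s) * (1 - / K * pE (z s)) - (nuE + deltaE) * pE (z s))
    by (apply functional_extensionality; intros s; unfold gT1, Rdiv; ring).
  replace (lin _ _ _ _ v) with
    (betaE * pF v * (1 - / K * pE (z t)) + betaE * pF (z t) * (0 - / K * pE v)
     - (nuE + deltaE) * pE v) by (unfold lin, Rdiv; ring).
  exact Hd.
Qed.

Definition violation_rate (betaE nuE deltaE deltaM deltaF nu : R) : R :=
  (betaE * nu * nuE - deltaF * (nuE + deltaE)) / ((1 - nu) * nuE) * (1 + deltaM)
  + 1 + (1 - nu) * nuE.

Section Model.
Variables (betaE nuE deltaE deltaM deltaF deltas K nu gammas k kappa : R).
Hypothesis HbetaE : 0 < betaE.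
Hypothesis HnuE : 0 < nuE.
Hypothesis HdeltaE : 0 < deltaE.
Hypothesis HdeltaM : 0 < deltaM.
Hypothesis HdeltaF : 0 < deltaF.
Hypothesis HK : 0 < K.
Hypothesis Hnu : 0 < nu < 1.
Hypothesis Hgammas : 0 < gammas.
Hypothesis Hkappa : 0 < kappa.
(* The conditions on [R0], [k] and [kappa] enter only through these facts
   (see [model_parameters]). *)
Hypothesis Hk : 0 < k.
Hypothesis Hgap : 0 < betaE * nu * nuE - deltaF * (nuE + deltaE).
Hypothesis Hkappa_gap :
  kappa * (betaE * nu * nuE - deltaF * (nuE + deltaE)) <= gammas * deltaF * (nuE + deltaE).
Hypothesis Hk_kappa : deltas - k <= kappa * k.

Local Notation Xm := (X betaE nuE deltaE deltaM deltaF deltas K nu gammas k).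
Local Notation g1 := (gT1 betaE nuE deltaE K).
Local Notation g2 := (gT2 kappa).
Local Notation g3 := (gT3 nu nuE deltaM).
(* [Kc] converts the production [(1 - nu) nuE E] into [gap E], where
   [gap = betaE nu nuE - deltaF (nuE + deltaE) > 0] is equivalent to [R0 > 1]. *)
Local Notation Kc := ((betaE * nu * nuE - deltaF * (nuE + deltaE)) / ((1 - nu) * nuE)).

Lemma Kc_pos : 0 < Kc.
Proof. apply Rdiv_lt_0_compat; [exact Hgap|apply Rmult_lt_0_compat; lra]. Qed.

Lemma production_controlled_by_violations (x : pt) : Dp x ->
  (g3 x + deltaM * pM x) * (pM x - kappa * pMs x) <=
  (Rmax 0 (g3 x) + deltaM * Rmax 0 (g2 x)) * (pM x + gammas * pMs x).
Proof.
  intros [HE [HM [_ HMs]]].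
  assert (Hg3 : g3 x = (1 - nu) * nuE * pE x - deltaM * pM x) by (unfold gT3, lin; ring).
  assert (Hg2 : g2 x = pM x - kappa * pMs x) by (unfold gT2, lin; ring).
  set (r3 := Rmax 0 (g3 x)). set (r2 := Rmax 0 (g2 x)).
  assert (Hr3 : 0 <= r3 /\ g3 x <= r3) by (split; [apply Rmax_l|apply Rmax_r]).
  assert (Hr2 : 0 <= r2 /\ g2 x <= r2) by (split; [apply Rmax_l|apply Rmax_r]).
  set (den := pM x + gammas * pMs x).
  destruct (Rle_or_lt (pM x - kappa * pMs x) 0) as [Hneg|Hpos].
  - assert (0 <= g3 x + deltaM * pM x).
    { rewrite Hg3. assert (0 <= (1 - nu) * nuE * pE x) by (apply Rmult_le_pos; nra). lra. }
    assert ((g3 x + deltaM * pM x) * (pM x - kappa * pMs x) <= 0)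
      by (rewrite <- (Rmult_0_r (g3 x + deltaM * pM x)); apply Rmult_le_compat_l; lra).
    assert (0 <= (r3 + deltaM * r2) * den) by (apply Rmult_le_pos; unfold den; nra).
    lra.
  - assert (pM x - kappa * pMs x <= den) by (unfold den; nra).
    assert (pM x <= den) by (unfold den; nra).
    assert (g3 x * (pM x - kappa * pMs x) <= r3 * den) by nra.
    assert (pM x * (pM x - kappa * pMs x) <= den * r2) by nra.
    nra.
Qed.

(* This is where the
   condition on [kappa] (through [Hkappa_gap]) is used. *)
Lemma recruitment_bound (x : pt) : Dp x ->
  betaE * (nu * nuE * pE x * (pM x / (pM x + gammas * pMs x))) <=
  deltaF * (nuE + deltaE) * pE x + Kc * (Rmax 0 (g3 x) + deltaM * Rmax 0 (g2 x)).
Proof.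
  intros HDx. pose proof HDx as [HE [HM [_ HMs]]].
  pose proof Kc_pos as HKc.
  assert (0 <= Kc * (Rmax 0 (g3 x) + deltaM * Rmax 0 (g2 x)))
    by (pose proof (Rmax_l 0 (g3 x)); pose proof (Rmax_l 0 (g2 x)); apply Rmult_le_pos; nra).
  assert (0 <= deltaF * (nuE + deltaE) * pE x) by (apply Rmult_le_pos; nra).
  set (den := pM x + gammas * pMs x).
  destruct (Req_dec den 0) as [Hden0|Hden0].
  { (* [M + gammas Ms = 0]: the quotient is [x / 0 = 0], so there is no recruitment *)
    rewrite Hden0. unfold Rdiv. rewrite Rinv_0, !Rmult_0_r. lra. }
  assert (Hden : 0 < den) by (unfold den in *; nra).
  apply Rmult_le_reg_r with den; [exact Hden|].
  replace (betaE * (nu * nuE * pE x * (pM x / den)) * den)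
    with (betaE * nu * nuE * pE x * pM x) by (field; lra).
  (* the excess over the linear loss is at most [E gap (M - kappa Ms)] ... *)
  assert (Hexcess : betaE * nu * nuE * pE x * pM x - deltaF * (nuE + deltaE) * pE x * den
                    <= pE x * (betaE * nu * nuE - deltaF * (nuE + deltaE))
                       * (pM x - kappa * pMs x)).
  { assert (0 <= pE x * pMs x * (gammas * deltaF * (nuE + deltaE)
                                 - kappa * (betaE * nu * nuE - deltaF * (nuE + deltaE))))
      by (apply Rmult_le_pos; [nra|lra]).
    unfold den in *. nra. }
  (* ... and [E gap = Kc (g3 + deltaM M)] *)
  assert (HEgap : pE x * (betaE * nu * nuE - deltaF * (nuE + deltaE))
                  * (pM x - kappa * pMs x)
                  = Kc * ((g3 x + deltaM * pM x) * (pM x - kappa * pMs x)))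
    by (unfold gT3, lin; field; split; lra).
  assert (Kc * ((g3 x + deltaM * pM x) * (pM x - kappa * pMs x)) <=
          Kc * ((Rmax 0 (g3 x) + deltaM * Rmax 0 (g2 x)) * den))
    by (apply Rmult_le_compat_l; [lra|apply production_controlled_by_violations, HDx]).
  lra.
Qed.

Lemma velocity_bound_T3 (z v : pt) :
  filippov_set Xm z v -> 0 <= g3 z ->
  lin ((1 - nu) * nuE) (- deltaM) 0 0 v <= (1 - nu) * nuE * Rmax 0 (g1 z).
Proof.
  intros Hv Hg3.
  pose proof (filippov_lin_bound Xm z v ((1 - nu) * nuE) (- deltaM) 0 0
    (fun x => (1 - nu) * nuE * g1 x - deltaM * g3 x) Hv) as Hbound.
  eapply Rle_trans.
  - apply Hbound; [unfold gT1, gT3, lin; prove_pcont|].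
    intros x _. unfold X, gT1, gT3, lin. simpl. apply Req_le. ring.
  - assert (0 < (1 - nu) * nuE) by (apply Rmult_lt_0_compat; lra).
    pose proof (Rmax_r 0 (g1 z)). nra.
Qed.

Lemma velocity_bound_T2 (z v : pt) :
  filippov_set Xm z v -> Dp z -> 0 <= g2 z ->
  lin 0 1 0 (- kappa) v <= Rmax 0 (g3 z).
Proof.
  intros Hv [_ [HM [_ HMs]]] Hg2.
  pose proof (filippov_lin_bound Xm z v 0 1 0 (- kappa)
    (fun x => g3 x - kappa * (k * (pM x + pMs x) - deltas * pMs x)) Hv) as Hbound.
  eapply Rle_trans.
  - apply Hbound; [unfold gT3, lin; prove_pcont|].
    intros x _. unfold X, gT3, lin. simpl. apply Req_le. ring.
  - (* with [M >= kappa Ms], the sterile-male term can only decrease [M - kappa Ms] *)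
    unfold gT2, lin in Hg2.
    assert (kappa * k * (kappa * pMs z) <= kappa * k * pM z)
      by (apply Rmult_le_compat_l; nra).
    assert (kappa * (deltas - k) * pMs z <= kappa * (kappa * k) * pMs z)
      by (apply Rmult_le_compat_r; [lra|apply Rmult_le_compat_l; lra]).
    pose proof (Rmax_r 0 (g3 z)). nra.
Qed.

Lemma T1_active_below_capacity (z : pt) : Dp z -> 0 <= g1 z -> 0 <= 1 - pE z / K <= 1.
Proof.
  intros [HE [_ [HF _]]] Hg1. unfold gT1 in Hg1.
  assert (0 <= pE z / K) by (apply Rmult_le_pos; [lra|left; apply Rinv_0_lt_compat; lra]).
  split; [|lra].
  apply Rnot_lt_le. intros Hneg.
  assert (betaE * pF z * (1 - pE z / K) <= 0) by (assert (0 <= betaE * pF z) by nra; nra).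
  assert (HE0 : pE z = 0) by nra.
  rewrite HE0, Rdiv_0_l in Hneg. lra.
Qed.

Lemma velocity_bound_T1 (z v : pt) :
  filippov_set Xm z v -> Dp z -> 0 <= g1 z ->
  lin (- (betaE * pF z / K + (nuE + deltaE))) 0 (betaE * (1 - pE z / K)) 0 v <=
  Kc * (1 + deltaM) * (Rmax 0 (g2 z) + Rmax 0 (g3 z)).
Proof.
  intros Hv HDz Hg1. pose proof HDz as [HE [_ [HF _]]].
  pose proof Kc_pos as HKc.
  set (c := 1 - pE z / K).
  assert (Hc : 0 <= c <= 1) by (apply T1_active_below_capacity; assumption).
  set (s := betaE * pF z / K + (nuE + deltaE)).
  set (B := fun x => - s * g1 x
      + c * (deltaF * (nuE + deltaE) * pE x + Kc * (Rmax 0 (g3 x) + deltaM * Rmax 0 (g2 x)))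
      - betaE * c * deltaF * pF x).
  eapply Rle_trans.
  - apply (filippov_lin_bound Xm z v (- s) 0 (betaE * c) 0 B Hv);
      [unfold B, gT1, gT2, gT3, lin; prove_pcont|].
    intros x HDx. pose proof (recruitment_bound x HDx) as Hrec.
    assert (c * (betaE * (nu * nuE * pE x * (pM x / (pM x + gammas * pMs x)))) <=
            c * (deltaF * (nuE + deltaE) * pE x + Kc * (Rmax 0 (g3 x) + deltaM * Rmax 0 (g2 x))))
      by (apply Rmult_le_compat_l; [lra|exact Hrec]).
    unfold lin, X, B. simpl. fold (g1 x). nra.
  - unfold B. fold c in Hg1.
    assert (Hg1_def : g1 z = betaE * pF z * c - (nuE + deltaE) * pE z) by reflexivity.
    pose proof (Rmax_l 0 (g3 z)). pose proof (Rmax_l 0 (g2 z)).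
    assert (0 <= betaE * pF z / K)
      by (apply Rmult_le_pos; [nra|left; apply Rinv_0_lt_compat; lra]).
    assert (0 <= s * g1 z) by (apply Rmult_le_pos; unfold s in *; lra).
    (* the death of F compensates the linear part of the recruitment *)
    assert (c * deltaF * ((nuE + deltaE) * pE z - betaE * pF z) <= 0).
    { assert (betaE * pF z * c <= betaE * pF z) by (assert (0 <= betaE * pF z) by nra; nra).
      assert (0 <= c * deltaF) by nra. nra. }
    assert (c * (Kc * (Rmax 0 (g3 z) + deltaM * Rmax 0 (g2 z))) <=
            Kc * (1 + deltaM) * (Rmax 0 (g2 z) + Rmax 0 (g3 z))).
    { assert (0 <= Kc * (Rmax 0 (g3 z) + deltaM * Rmax 0 (g2 z))) by (apply Rmult_le_pos; nra).
      assert (Kc * (Rmax 0 (g3 z) + deltaM * Rmax 0 (g2 z)) <=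
              Kc * ((1 + deltaM) * (Rmax 0 (g2 z) + Rmax 0 (g3 z))))
        by (apply Rmult_le_compat_l; nra).
      nra. }
    nra.
Qed.

Local Notation V := (violation betaE nuE deltaE deltaM K nu kappa).

Lemma violation_dini (z : R -> pt) (t : R) (v : pt) :
  Dp (z t) -> path_derivative z t v -> filippov_set Xm (z t) v ->
  right_dini_le (fun s => V (z s)) t
    (violation_rate betaE nuE deltaE deltaM deltaF nu * V (z t)).
Proof.
  intros HDz Hd Hv. pose proof Kc_pos. unfold violation_rate.
  assert (Hc3 : 0 < (1 - nu) * nuE) by (apply Rmult_lt_0_compat; lra).
  set (r1 := Rmax 0 (g1 (z t))). set (r2 := Rmax 0 (g2 (z t))). set (r3 := Rmax 0 (g3 (z t))).
  assert (0 <= r1 /\ 0 <= r2 /\ 0 <= r3) as [Hr1 [Hr2 Hr3]] by (repeat split; apply Rmax_l).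
  assert (P1 : right_dini_le (fun s => Rmax 0 (g1 (z s))) t (Kc * (1 + deltaM) * (r2 + r3))).
  { apply (right_dini_le_pos_part _ t _ _ (gT1_path_derivative z t v betaE nuE deltaE K Hd)).
    - intros Hg. apply velocity_bound_T1; assumption.
    - apply Rmult_le_pos; [apply Rmult_le_pos|]; lra. }
  assert (P2 : right_dini_le (fun s => Rmax 0 (g2 (z s))) t r3).
  { apply (right_dini_le_pos_part _ t _ _ (lin_path_derivative z t v 0 1 0 (- kappa) Hd)).
    - intros Hg. apply velocity_bound_T2; assumption.
    - exact Hr3. }
  assert (P3 : right_dini_le (fun s => Rmax 0 (g3 (z s))) t ((1 - nu) * nuE * r1)).
  { apply (right_dini_le_pos_part _ t _ _
      (lin_path_derivative z t v ((1 - nu) * nuE) (- deltaM) 0 0 Hd)).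
    - intros Hg. apply velocity_bound_T3; assumption.
    - apply Rmult_le_pos; lra. }
  eapply right_dini_le_weaken; [|exact (right_dini_le_plus _ _ _ _ _
                                   (right_dini_le_plus _ _ _ _ _ P1 P2) P3)].
  unfold violation. fold r1 r2 r3.
  assert (0 <= Kc * (1 + deltaM) * r1) by (apply Rmult_le_pos; [apply Rmult_le_pos|]; lra).
  assert (0 <= (1 - nu) * nuE * (r2 + r3)) by (apply Rmult_le_pos; lra).
  nra.
Qed.

Lemma violation_rate_nonneg : 0 <= violation_rate betaE nuE deltaE deltaM deltaF nu.
Proof.
  pose proof Kc_pos. assert (0 < (1 - nu) * nuE) by (apply Rmult_lt_0_compat; lra).
  unfold violation_rate. assert (0 <= Kc * (1 + deltaM)) by (apply Rmult_le_pos; lra). lra.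
Qed.

Lemma violation_lipschitz_bounded (Bd : R) : 0 <= Bd ->
  exists Lv, 0 <= Lv /\ forall p q, Rabs (pE p) <= Bd -> Rabs (pF q) <= Bd ->
    Rabs (V p - V q) <= Lv * pdist p q.
Proof.
  intros HBd.
  set (L1 := betaE * (1 + 2 * Bd / K) + (nuE + deltaE)).
  set (L2 := Rabs 0 + Rabs 1 + Rabs 0 + Rabs (- kappa)).
  set (L3 := Rabs ((1 - nu) * nuE) + Rabs (- deltaM) + Rabs 0 + Rabs 0).
  exists (L1 + L2 + L3). split.
  - assert (0 <= 2 * Bd / K) by (apply Rmult_le_pos; [lra|left; apply Rinv_0_lt_compat; lra]).
    unfold L1, L2, L3. pose proof (Rabs_pos 0). pose proof (Rabs_pos 1).
    pose proof (Rabs_pos (- kappa)). pose proof (Rabs_pos ((1 - nu) * nuE)).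
    pose proof (Rabs_pos (- deltaM)). nra.
  - intros p q Hp Hq.
    assert (H1 : Rabs (Rmax 0 (g1 p) - Rmax 0 (g1 q)) <= L1 * pdist p q)
      by (eapply Rle_trans; [apply Rmax0_lipschitz|apply gT1_lipschitz; auto; lra]).
    assert (H2 : Rabs (Rmax 0 (g2 p) - Rmax 0 (g2 q)) <= L2 * pdist p q)
      by (eapply Rle_trans; [apply Rmax0_lipschitz|apply lin_lipschitz]).
    assert (H3 : Rabs (Rmax 0 (g3 p) - Rmax 0 (g3 q)) <= L3 * pdist p q)
      by (eapply Rle_trans; [apply Rmax0_lipschitz|apply lin_lipschitz]).
    apply Rabs_le_inv in H1, H2, H3.
    unfold violation. apply Rabs_le. split; lra.
Qed.

Lemma violation_locally_lipschitz (I : R -> Prop) (z : R -> pt) :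
  loc_lipschitz_on I z -> loc_lipschitz_fun I (fun s => V (z s)).
Proof.
  intros Hz s Is. destruct (Hz s Is) as [del [L0 [Hdel HL]]].
  set (L := Rabs L0). assert (HL0 : 0 <= L) by apply Rabs_pos.
  assert (Hpd : forall u w, I u -> I w -> Rabs (u - s) < del -> Rabs (w - s) < del ->
                  pdist (z u) (z w) <= L * Rabs (u - w)).
  { intros u w Iu Iw Hu Hw. eapply Rle_trans; [apply HL; assumption|].
    apply Rmult_le_compat_r; [apply Rabs_pos|apply Rle_abs]. }
  (* near [s] the path stays in a bounded set *)
  set (Bd := Rabs (pE (z s)) + Rabs (pF (z s)) + L * del).
  assert (HBd : forall u, I u -> Rabs (u - s) < del ->
                  Rabs (pE (z u)) <= Bd /\ Rabs (pF (z u)) <= Bd).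
  { intros u Iu Hu.
    assert (Hus : pdist (z u) (z s) <= L * del).
    { eapply Rle_trans; [apply Hpd; try assumption; rewrite Rminus_diag, Rabs_R0; lra|].
      apply Rmult_le_compat_l; lra. }
    destruct (coord_le_pdist (z u) (z s)) as [HE [_ [HF _]]].
    pose proof (Rabs_triang_inv (pE (z u)) (pE (z s))).
    pose proof (Rabs_triang_inv (pF (z u)) (pF (z s))).
    pose proof (Rabs_pos (pE (z s))). pose proof (Rabs_pos (pF (z s))).
    unfold Bd. split; lra. }
  destruct (violation_lipschitz_bounded Bd) as [Lv [HLv HV]].
  { unfold Bd. pose proof (Rabs_pos (pE (z s))). pose proof (Rabs_pos (pF (z s))). nra. }
  exists del, (Lv * L). split; [exact Hdel|split; [apply Rmult_le_pos; assumption|]].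
  intros u w [Iu Hu] [Iw Hw].
  eapply Rle_trans; [apply HV; [apply (HBd u Iu Hu)|apply (HBd w Iw Hw)]|].
  rewrite Rmult_assoc. apply Rmult_le_compat_l; [exact HLv|apply Hpd; assumption].
Qed.

End Model.

Lemma model_parameters (betaE nuE deltaE deltaF deltas nu gammas k kappa : R) :
  0 < betaE -> 0 < nuE -> 0 < deltaE -> 0 < deltaF -> 0 < deltas ->
  0 < nu < 1 -> 0 < gammas <= 1 ->
  1 < repro_number betaE nu nuE deltaE deltaF ->
  (betaE * nu * nuE - (nuE + deltaE) * deltaF)
    / (betaE * nu * nuE - (1 - gammas) * (nuE + deltaE) * deltaF) * deltas < k ->
  (deltas - k) / k <= kappa ->
  kappa <= gammas * deltaF * (nuE + deltaE) / (betaE * nu * nuE - deltaF * (nuE + deltaE)) ->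
  0 < betaE * nu * nuE - deltaF * (nuE + deltaE) /\
  kappa * (betaE * nu * nuE - deltaF * (nuE + deltaE)) <= gammas * deltaF * (nuE + deltaE) /\
  0 < k /\ deltas - k <= kappa * k.
Proof.
  intros HbetaE HnuE HdeltaE HdeltaF Hdeltas Hnu Hgammas HR0 Hk1 Hkappa1 Hkappa2.
  assert (Hloss : 0 < deltaF * (nuE + deltaE)) by (apply Rmult_lt_0_compat; lra).
  assert (Hgap : 0 < betaE * nu * nuE - deltaF * (nuE + deltaE)).
  { unfold repro_number in HR0. apply (Rmult_lt_compat_r (deltaF * (nuE + deltaE))) in HR0;
      [|exact Hloss].
    replace (betaE * nu * nuE / (deltaF * (nuE + deltaE)) * (deltaF * (nuE + deltaE)))
      with (betaE * nu * nuE) in HR0 by (field; split; lra).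
    lra. }
  assert (Hk : 0 < k).
  { assert (0 <= gammas * (nuE + deltaE) * deltaF) by (apply Rmult_le_pos; nra).
    assert (0 < (betaE * nu * nuE - (nuE + deltaE) * deltaF)
                / (betaE * nu * nuE - (1 - gammas) * (nuE + deltaE) * deltaF) * deltas)
      by (apply Rmult_lt_0_compat; [apply Rdiv_lt_0_compat; nra|lra]).
    lra. }
  repeat split; try lra.
  - apply (Rmult_le_compat_r (betaE * nu * nuE - deltaF * (nuE + deltaE))) in Hkappa2; [|lra].
    replace (gammas * deltaF * (nuE + deltaE) / (betaE * nu * nuE - deltaF * (nuE + deltaE))
             * (betaE * nu * nuE - deltaF * (nuE + deltaE)))
      with (gammas * deltaF * (nuE + deltaE)) in Hkappa2 by (field; lra).
    lra.
  - apply (Rmult_le_compat_r k) in Hkappa1; [|lra].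
    replace ((deltas - k) / k * k) with (deltas - k) in Hkappa1 by (field; lra). lra.
Qed.

Theorem theorem5
  (betaE nuE deltaE deltaM deltaF deltas K nu gammas k kappa : R)
  (HbetaE : 0 < betaE) (HnuE : 0 < nuE) (HdeltaE : 0 < deltaE)
  (HdeltaM : 0 < deltaM) (HdeltaF : 0 < deltaF) (Hdeltas : 0 < deltas)
  (HK : 0 < K) (Hnu : 0 < nu < 1) (Hgammas : 0 < gammas <= 1)
  (Hds : deltaM <= deltas)
  (HR0 : 1 < repro_number betaE nu nuE deltaE deltaF)
  (Hk1 : (betaE * nu * nuE - (nuE + deltaE) * deltaF)
         / (betaE * nu * nuE - (1 - gammas) * (nuE + deltaE) * deltaF)
         * deltas < k)
  (Hk2 : k < deltas)
  (Hkappa0 : 0 < kappa)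
  (Hkappa1 : (deltas - k) / k <= kappa)
  (Hkappa2 : kappa <= gammas * deltaF * (nuE + deltaE)
                      / (betaE * nu * nuE - deltaF * (nuE + deltaE))) :
  positively_invariant
    (X betaE nuE deltaE deltaM deltaF deltas K nu gammas k)
    (Mset betaE nuE deltaE deltaM K nu kappa).
Proof.
  destruct (model_parameters betaE nuE deltaE deltaF deltas nu gammas k kappa)
    as [Hgap [Hkappa_gap [Hk Hk_kappa]]]; try assumption.
  intros I z HI HI0 [HDp [Hlip [N [HN Hder]]]] HM0 T HIT HT.
  apply Mset_iff_violation. split; [exact (HDp T HIT)|].
  apply (dini_gronwall_vanishing I (fun s => violation betaE nuE deltaE deltaM K nu kappa (z s))
           N (violation_rate betaE nuE deltaE deltaM deltaF nu)); try assumption.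
  - apply violation_rate_nonneg; assumption.
  - apply Mset_iff_violation in HM0. tauto.
  - apply violation_locally_lipschitz; assumption.
  - intros t It HNt. destruct (Hder t It HNt) as [v [HdE [HdM [HdF [HdMs Hv]]]]].
    apply (violation_dini betaE nuE deltaE deltaM deltaF deltas K nu gammas k kappa) with (v := v);
      try assumption; try lra.
    + apply HDp, It.
    + repeat split; assumption.
Qed.
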